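(* Let $n\ge 2$, let $G$ and $H$ be non-trivial groups, let $\sigma\colon G\to S_n$ be a surjective homomorphism, and let $W=H\wr_\sigma G=H^n\rtimes_\sigma G$. Then \[ Z(W)=\Delta(Z(H))\times\bigl(Z(G)\cap\ker\sigma\bigr), \] where $\Delta(Z(H))=\{((a,\dots,a),1): a\in Z(H)\}$ and $Z(G)\cap\ker\sigma$ is identified with $\{(\mathbf 1,g): g\in Z(G)\cap\ker\sigma\}$. In particular, if $Z(G)\subseteq\ker\sigma$, then $Z(W)=\Delta(Z(H))\times Z(G)$.
   Context: For $n\ge2$, groups $G,H$ and a homomorphism $\sigma\colon G\to S_n$, the permutational wreath pullback $H\wr_\sigma G=H^n\rtimes_\sigma G$ is the semidirect product in which $G$ acts on $H^n$ by permuting coordinates through $\sigma$: $g\cdot(h_1,\dots,h_n)=(h_{\sigma(g)(1)},\dots,h_{\sigma(g)(n)})$ (with the composition convention in $S_n$ making this a left action). Elements are pairs $(\mathbf h,g)$ with $\mathbf h\in H^n$, $g\in G$, and $(\mathbf h,g)(\mathbf k,x)=(\mathbf h\cdot g\mathbf k,\,gx)$. The diagonal map is $\Delta\colon H\to H^n$, $\Delta(h)=(h,\dots,h)$. *)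

From mathcomp Require Import all_boot all_fingroup.
Set Implicit Arguments. Unset Strict Implicit. Unset Printing Implicit Defensive.

(* Abstract (possibly infinite) groups: carrier with operations and axioms. *)
Record Grp := {
  gcar :> Type;
  gmul : gcar -> gcar -> gcar;
  gone : gcar;
  ginv : gcar -> gcar;
  gmulA : forall x y z, gmul x (gmul y z) = gmul (gmul x y) z;
  gmul1 : forall x, gmul gone x = x;
  gmulV : forall x, gmul (ginv x) x = gone
}.

Arguments gmul {g}.
Arguments gone {g}.
Arguments ginv {g}.

Definition nontrivial (G : Grp) : Prop := exists x : G, x <> gone.

Definition in_center (G : Grp) (z : G) : Prop := forall x : G, gmul z x = gmul x z.

(* group homomorphism into S_n = {perm 'I_n}.  With mathcomp's convention
   (s * t) i = t (s i), the formula g.h = (h_{sigma g (i)})_i is a left action. *)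
Definition is_hom (G : Grp) (n : nat) (sigma : G -> {perm 'I_n}) : Prop :=
  forall g x : G, sigma (gmul g x) = (sigma g * sigma x)%g.

Definition wr_elt (H G : Grp) (n : nat) : Type := ('I_n -> H) * G.

Definition wr_act (H G : Grp) (n : nat) (sigma : G -> {perm 'I_n})
  (g : G) (h : 'I_n -> H) : 'I_n -> H := fun i => h (sigma g i).

Definition wr_mul (H G : Grp) (n : nat) (sigma : G -> {perm 'I_n})
  (w v : wr_elt H G n) : wr_elt H G n :=
  (fun i => gmul (w.1 i) (wr_act sigma w.2 v.1 i), gmul w.2 v.2).

Definition in_wr_center (H G : Grp) (n : nat) (sigma : G -> {perm 'I_n})
  (w : wr_elt H G n) : Prop :=
  forall v : wr_elt H G n, wr_mul sigma w v = wr_mul sigma v w.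

Definition diag {H : Grp} (n : nat) (a : H) : 'I_n -> H := fun _ => a.
Arguments diag {H} n a.

From Stdlib Require Import FunctionalExtensionality.
From mathcomp Require Import all_boot all_fingroup.

Set Implicit Arguments.
Unset Strict Implicit.
Unset Printing Implicit Defensive.

(* For central (h, g), commuting with (k, 1) forces h_i k_(sigma g i) = k_i h_i
   for every k : H^n; constant k make each h_i central, after which every k is
   sigma(g)-invariant, so sigma g = 1 as soon as H has two elements.  Commuting
   with (1, x) makes h sigma(x)-invariant, hence constant since sigma is onto,
   and g central. *)

Section GroupFacts.
Variable G : Grp.

Lemma gmulVr (x : G) : gmul x (ginv x) = gone.
Proof.
have e : gmul (ginv (ginv x)) (ginv x) = gone by apply: gmulV.
rewrite -[gmul x (ginv x)]gmul1 -{1}e -!gmulA (gmulA (ginv x)) gmulV gmul1.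
exact: e.
Qed.

Lemma gmul1r (x : G) : gmul x gone = x.
Proof. by rewrite -(gmulV x) gmulA gmulVr gmul1. Qed.

Lemma gmulI (a : G) : injective (gmul a).
Proof. by move=> b c e; rewrite -(gmul1 b) -(gmulV a) -gmulA e gmulA gmulV gmul1. Qed.

Lemma hom_gone (n : nat) (sigma : G -> {perm 'I_n}) :
  is_hom sigma -> sigma gone = 1%g.
Proof.
move=> hom; apply: (mulgI (sigma gone)).
by rewrite -hom gmul1 mulg1.
Qed.

End GroupFacts.

Section Permutations.
Variable n : nat.

Lemma perm_invariant_const (T : Type) (h : 'I_n -> T) :
  (forall (s : {perm 'I_n}) i, h (s i) = h i) -> forall i j, h i = h j.
Proof. by move=> hinv i j; rewrite -(hinv (tperm i j) i) tpermL. Qed.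

Lemma perm_invariant_maps_eq1 (T : Type) (t0 t1 : T) (s : {perm 'I_n}) :
  t0 <> t1 -> (forall (k : 'I_n -> T) i, k (s i) = k i) -> s = 1%g.
Proof.
move=> t01 kinv; apply/permP => i; rewrite perm1; apply/eqP; apply/negPn/negP => si.
apply: t01; have := kinv (fun j => if j == i then t1 else t0) i.
by rewrite eqxx (negbTE si).
Qed.

End Permutations.

Section WreathCenter.
Variables (H G : Grp) (n : nat) (sigma : G -> {perm 'I_n}).
Implicit Types (h k : 'I_n -> H) (g x : G).

Lemma in_wr_centerP h g :
  in_wr_center sigma (h, g) <->
  forall k x, (forall i, gmul (h i) (k (sigma g i)) = gmul (k i) (h (sigma x i)))
              /\ gmul g x = gmul x g.
Proof.
split=> [C k x | C [k x]].
- by case: (C (k, x)) => /equal_f.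
- have [e ex] := C k x.
  rewrite /wr_mul /wr_act /= ex; congr pair.
  exact: functional_extensionality.
Qed.

Lemma wr_center_diag (a : H) g :
  in_center a -> in_center g -> sigma g = 1%g -> in_wr_center sigma (diag n a, g).
Proof.
move=> ac gc sg1; apply/in_wr_centerP => k x.
by rewrite sg1; split=> // i; rewrite perm1 ac.
Qed.

Section CentralElement.
Variables (h : 'I_n -> H) (g : G).
Hypothesis hgC : in_wr_center sigma (h, g).

Lemma wr_center_top_central : in_center g.
Proof. by move=> x; case: (proj1 (in_wr_centerP h g) hgC (fun=> gone) x). Qed.

Lemma wr_center_base_invariant x i : h (sigma x i) = h i.
Proof.
have [e _] := proj1 (in_wr_centerP h g) hgC (fun=> gone) x.
by have := e i; rewrite gmul1 gmul1r => ->.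
Qed.

Hypothesis hom : is_hom sigma.

Lemma wr_center_base_commute k i : gmul (h i) (k (sigma g i)) = gmul (k i) (h i).
Proof.
have [e _] := proj1 (in_wr_centerP h g) hgC k gone.
by rewrite e hom_gone // perm1.
Qed.

Lemma wr_center_base_central i : in_center (h i).
Proof. by move=> b; have := wr_center_base_commute (fun=> b) i. Qed.

Lemma wr_center_top_invariant k i : k (sigma g i) = k i.
Proof.
apply: (@gmulI _ (h i)).
by rewrite wr_center_base_commute wr_center_base_central.
Qed.

End CentralElement.

Lemma wr_centerE (i0 : 'I_n) :
  is_hom sigma -> (forall s : {perm 'I_n}, exists g, sigma g = s) -> nontrivial H ->
  forall w : wr_elt H G n,
    in_wr_center sigma w <->
    exists (a : H) (g : G),
      [/\ in_center a, in_center g, sigma g = 1%g & w = (diag n a, g)].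
Proof.
move=> hom surj [t1 t1ne] [h g]; split=> [hgC | [a [x [ac xc sx1 ->]]]]; last first.
  exact: wr_center_diag.
have hconst i : h i = h i0.
  apply: perm_invariant_const => s j.
  by have [x <-] := surj s; apply: wr_center_base_invariant hgC x j.
exists (h i0), g; split.
- exact: wr_center_base_central.
- exact: wr_center_top_central hgC.
- exact: perm_invariant_maps_eq1 t1ne (wr_center_top_invariant hgC hom).
- by congr pair; apply: functional_extensionality hconst.
Qed.

End WreathCenter.

Theorem theorem3p3 (n : nat) (G H : Grp) (sigma : G -> {perm 'I_n}) :
  2 <= n -> nontrivial G -> nontrivial H ->
  is_hom sigma -> (forall s : {perm 'I_n}, exists g : G, sigma g = s) ->
  (forall w : wr_elt H G n,
     in_wr_center sigma w <->
     exists (a : H) (g : G),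
       [/\ in_center a, in_center g, sigma g = 1%g & w = (diag n a, g)])
  /\
  ((forall g : G, in_center g -> sigma g = 1%g) ->
   forall w : wr_elt H G n,
     in_wr_center sigma w <->
     exists (a : H) (g : G), [/\ in_center a, in_center g & w = (diag n a, g)]).
Proof.
move=> n2 _ ntH hom surj.
have centerE := wr_centerE (Ordinal (ltnW n2)) hom surj ntH.
split=> // ZGker w; apply: iff_trans (centerE w) _.
split=> -[a [g [ac gc]]]; last by exists a, g; split; rewrite ?ZGker.
by case=> _ ->; exists a, g.
Qed.
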